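(* Let $M_t\ge 1$, $\nu\ge 0$, $d\in\{1,\dots,M_t\}$ be integers and set $R=M_t-d+1$. If $T\ge (2^R-1)\nu+(2^R-1)(\nu+1)\big((M_t-2)(2^R-1)+R\big)$, then there exists a set $\mathcal{P}_{\nu,d}$ of binary matrices $\mathbf{B}\in\mathbb{F}_2^{M_t\times T}$, each having its last $\nu$ columns equal to zero, such that (1) for every pair of distinct $\mathbf{A},\mathbf{B}\in\mathcal{P}_{\nu,d}$, $\operatorname{rank}_{\mathbb{F}_2}\big(\Theta(\mathbf{A})-\Theta(\mathbf{B})\big)\ge d(\nu+1)$, and (2) $\log_2|\mathcal{P}_{\nu,d}|\ge R\big(T-\nu-(\nu+1)(M_t-1)(2^R-1)2^{R-1}\big)$.
   Context: For $\mathbf{B}=[\mathbf{c}[0],\dots,\mathbf{c}[T-\nu-1],\mathbf{0},\dots,\mathbf{0}]\in\mathbb{F}_2^{M_t\times T}$ (last $\nu$ columns zero), $\Theta(\mathbf{B})\in\mathbb{F}_2^{(\nu+1)M_t\times T}$ is the block-Toeplitz matrix with $\nu+1$ block rows, block row $i$ ($i=0,\dots,\nu$) being $\mathbf{B}$ with its columns shifted right by $i$ positions, i.e. $[\mathbf{0},\dots,\mathbf{0},\mathbf{c}[0],\dots,\mathbf{c}[T-\nu-1],\mathbf{0},\dots,\mathbf{0}]$ with $i$ leading and $\nu-i$ trailing zero columns. *)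

From HB Require Import structures.
From mathcomp Require Import all_boot all_order all_algebra.
Set Implicit Arguments. Unset Strict Implicit. Unset Printing Implicit Defensive.
Import GRing.Theory.
Local Open Scope ring_scope.

Notation bmx Mt T := 'M['F_2]_(Mt, T).

(* B with its columns shifted right by i positions (columns shifted past
   position T-1 are dropped; for the matrices considered these are zero). *)
Definition shift_mx (Mt T i : nat) (B : bmx Mt T) : bmx Mt T :=
  \matrix_(r < Mt, c < T) (if (i <= c)%N then B r (insubd c (c - i)%N) else 0).

(* Theta(B): block-Toeplitz matrix with nu+1 block rows, block row i being
   B shifted right by i. Its row count is \sum_(i < nu.+1) Mt = (nu+1) Mt. *)
Definition Theta (Mt T nu : nat) (B : bmx Mt T) :
  'M['F_2]_(\sum_(i < nu.+1) Mt, T) :=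
  \mxcol_(i < nu.+1) shift_mx i B.

Definition last_cols_zero (Mt T nu : nat) (B : bmx Mt T) : Prop :=
  forall (r : 'I_Mt) (c : 'I_T), (T - nu <= c)%N -> B r c = 0.

From mathcomp Require Import all_boot all_order all_algebra zify.
Set Implicit Arguments. Unset Strict Implicit. Unset Printing Implicit Defensive.
Import GRing.Theory Num.Theory.
Local Open Scope ring_scope.

(* Read each of the R rows of a payload matrix U as a polynomial u_k of degree < K
   and put x^(r (nu+1) (k+1)) u_k(x), summed over k, in row r of the code matrix.
   In row r of the difference of two codewords, the lowest term comes from the
   nonzero u_k minimising r (nu+1) (k+1) + val(u_k).  This exponent grows faster
   in r for larger k, so the minimising indices move weakly down as r grows and
   at most R-1 rows have a tie.  Every other row has an isolated lowest term, at
   exponents increasing by at least nu+1 from row to row; their nu+1 shifts in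
   Theta give (nu+1)(Mt-R+1) = d(nu+1) distinct pivot columns. *)

Lemma mxrank_ge_pivots (F : fieldType) m n (M : 'M[F]_(m, n)) (I : finType)
    (g : I -> 'I_m) (w : I -> 'I_n) :
  injective w -> (forall i, M (g i) (w i) != 0) ->
  (forall i (c : 'I_n), (c < w i)%N -> M (g i) c = 0) -> (#|I| <= \rank M)%N.
Proof.
move=> w_inj pivot_nz before_pivot.
pose sel (j : 'I_#|I|) := g (enum_val j).
apply: leq_trans (mxrankS (rowsub_sub sel M)).
suff : row_free (rowsub sel M) by rewrite /row_free => /eqP ->.
rewrite -kermx_eq0; apply/eqP/row_matrixP => k; rewrite row0.
have : row k (kermx (rowsub sel M)) *m rowsub sel M = 0.
  by apply/sub_kermxP; exact: row_sub.
move: (row k _) => u uM0; apply/rowP => j0; rewrite mxE.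
apply/eqP/negPn/negP => uj0.
(* The pivot of the summand with leftmost pivot survives in [u *m rowsub sel M]. *)
have [j uj jmin] := arg_minnP (fun j => w (enum_val j) : nat) (P := fun j => u 0 j != 0) uj0.
move/matrixP: uM0 => /(_ 0 (w (enum_val j))); rewrite !mxE (bigD1 j) //= big1 ?addr0.
  by rewrite mxE; apply/eqP; rewrite mulf_neq0 ?pivot_nz.
move=> j' j'j; rewrite mxE.
have [->|uj'] := eqVneq (u 0 j') 0; first by rewrite mul0r.
rewrite before_pivot ?mulr0 //; rewrite ltn_neqAle jmin // andbT.
by apply: contra j'j => /eqP/val_inj/w_inj/enum_val_inj ->.
Qed.

Section Theta.
Variables (Mt T nu : nat).

Lemma Theta_sub (A B : bmx Mt T) : Theta nu A - Theta nu B = Theta nu (A - B).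
Proof. by apply/matrixP => s c; rewrite !mxE; case: ifP => _; rewrite ?mxE ?subr0. Qed.

Lemma Theta_block (B : bmx Mt T) (i : 'I_nu.+1) (r : 'I_Mt) (c : 'I_T) :
  Theta nu B (@tagnat.Rank nu.+1 (fun _ => Mt) i r) c = shift_mx i B r c.
Proof. by have /matrixP/(_ r c) := mxcolK (fun i => shift_mx i B) i; rewrite mxE. Qed.

Lemma rank_Theta_ge (B : bmx Mt T) (G : {set 'I_Mt}) (p : 'I_Mt -> nat) :
    (forall r, r \in G -> (p r + nu < T)%N) ->
    {in G &, forall r r' : 'I_Mt, (r < r')%N -> (p r + nu < p r')%N} ->
    (forall r (c : 'I_T), r \in G -> (c < p r)%N -> B r c = 0) ->
    (forall r (c : 'I_T), r \in G -> c = p r :> nat -> B r c != 0) ->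
  (nu.+1 * #|G| <= \rank (Theta nu B))%N.
Proof.
move=> p_fits p_gap B_lt B_at.
pose I := ('I_nu.+1 * {r : 'I_Mt | r \in G})%type.
have cardI : #|{: I}| = (nu.+1 * #|G|)%N.
  by rewrite card_prod card_ord card_sig.
have w_fits (x : I) : (p (val x.2) + x.1 < T)%N.
  by have := p_fits _ (valP x.2); have := ltn_ord x.1; lia.
pose g (x : I) := @tagnat.Rank nu.+1 (fun _ => Mt) x.1 (val x.2).
pose w (x : I) := Ordinal (w_fits x).
rewrite -cardI; apply: (@mxrank_ge_pivots _ _ _ _ _ g w).
- move=> [i [r rG]] [i' [r' r'G]] /(congr1 val) /= eq_w.
  have := ltn_ord i; have := ltn_ord i'.
  case: (ltngtP r r') => [lt_rr'|lt_r'r|/val_inj eq_rr'].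
  + by have := p_gap _ _ rG r'G lt_rr'; lia.
  + by have := p_gap _ _ r'G rG lt_r'r; lia.
  subst r'; have -> : i = i' by apply: val_inj => /=; lia.
  by rewrite (bool_irrelevance rG r'G).
- move=> [i [r rG]]; rewrite Theta_block mxE /= leq_addl.
  apply: B_at; rewrite // val_insubd addnK ifT //.
  by have := w_fits (i, exist _ r rG); rewrite /=; lia.
- move=> [i [r rG]] c /= lt_c; rewrite Theta_block mxE.
  case: ifP => //= le_ic; apply: B_lt => //.
  by rewrite val_insubd ifT; [lia | have := ltn_ord c; lia].
Qed.

End Theta.

(* [expo r k] is the lowest exponent that a payload row [k] of order of vanishing
   [v k] contributes to code row [r] in [interleave] below, with [s = nu.+1]. *)
Section LeadingExponent.
Variables (R s : nat) (S : {set 'I_R}) (k0 : 'I_R) (v : 'I_R -> nat).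
Hypotheses (s_gt0 : (0 < s)%N) (k0S : k0 \in S).

Definition expo (r : nat) (k : 'I_R) : nat := (r * s * k.+1 + v k)%N.

Definition argmin_expo (r : nat) : 'I_R := [arg min_(k < k0 in S) expo r k].

Definition min_expo (r : nat) : nat := expo r (argmin_expo r).

Definition attains_min (r : nat) (k : 'I_R) : bool :=
  (k \in S) && (expo r k == min_expo r).

Definition first_min (r : nat) : 'I_R :=
  [arg min_(k < argmin_expo r | attains_min r k) (k : nat)].

Definition last_min (r : nat) : 'I_R :=
  [arg max_(k > argmin_expo r | attains_min r k) (k : nat)].

Lemma argmin_expo_in r : argmin_expo r \in S.
Proof. by rewrite /argmin_expo; case: arg_minnP. Qed.

Lemma min_expo_le r k : k \in S -> (min_expo r <= expo r k)%N.
Proof. by rewrite /min_expo /argmin_expo; case: arg_minnP => // j _; apply. Qed.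

Lemma attains_argmin r : attains_min r (argmin_expo r).
Proof. by rewrite /attains_min argmin_expo_in eqxx. Qed.

Lemma first_minP r :
  attains_min r (first_min r) /\ forall k, attains_min r k -> (first_min r <= k)%N.
Proof. by rewrite /first_min; case: arg_minnP => [|k ? ?]; [exact: attains_argmin|]. Qed.

Lemma last_minP r :
  attains_min r (last_min r) /\ forall k, attains_min r k -> (k <= last_min r)%N.
Proof. by rewrite /last_min; case: arg_maxnP => [|k ? ?]; [exact: attains_argmin|]. Qed.

Lemma expo_shift r r' k : (r <= r')%N -> expo r' k = (expo r k + (r' - r) * s * k.+1)%N.
Proof. by move=> le_rr'; rewrite /expo addnAC -!mulnDl subnKC. Qed.

Lemma last_min_le_first_min r r' : (r < r')%N -> (last_min r' <= first_min r)%N.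
Proof.
move=> lt_rr'; have [/andP[firstS /eqP first_eq] _] := first_minP r.
have [/andP[lastS /eqP last_eq] _] := last_minP r'.
rewrite leqNgt; apply/negP => lt_fl.
have := min_expo_le r' firstS; have := min_expo_le r lastS.
move: last_eq; rewrite !(expo_shift _ (ltnW lt_rr')).
have : ((r' - r) * s * (first_min r).+1 < (r' - r) * s * (last_min r').+1)%N.
  by rewrite ltn_pmul2l ?muln_gt0 ?subn_gt0 ?lt_rr'.
lia.
Qed.

Lemma min_expo_gap r r' : (r < r')%N -> (min_expo r + s <= min_expo r')%N.
Proof.
move=> lt_rr'; have := min_expo_le r (argmin_expo_in r').
rewrite /min_expo [expo r' _](expo_shift _ (ltnW lt_rr')).
have : (s <= (r' - r) * s * (argmin_expo r').+1)%N.
  by rewrite -[X in (X <= _)%N]mul1n -mulnA leq_mul ?subn_gt0 // leq_pmulr.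
lia.
Qed.

Lemma attains_untied r k :
  first_min r = last_min r -> attains_min r k -> k = first_min r.
Proof.
move=> eq_fl att_k; apply: val_inj; apply/eqP.
by rewrite eqn_leq (first_minP r).2 // eq_fl (last_minP r).2.
Qed.

(* On a tied row [first_min < last_min]; the tie intervals of distinct rows are
   disjoint and decreasing, so [last_min] is injective on tied rows and avoids 0. *)
Lemma card_untied n : (n - R.-1 <= #|[set r : 'I_n | first_min r == last_min r]|)%N.
Proof.
set G := [set r : 'I_n | _].
have tied_lt r : r \in ~: G -> (first_min r < last_min r)%N.
  rewrite !inE => tied; rewrite ltn_neqAle (first_minP r).2 ?(last_minP r).1 // andbT.
  by apply: contra tied => /eqP/val_inj ->.
have last_inj : {in ~: G &, injective (fun r : 'I_n => last_min r)}.
  move=> r r' rT r'T eq_last; case: (ltngtP r r') => [lt|lt|/val_inj //].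
    by have := last_min_le_first_min lt; have := tied_lt _ rT; rewrite eq_last; lia.
  by have := last_min_le_first_min lt; have := tied_lt _ r'T; rewrite eq_last; lia.
have R_gt0 : (0 < R)%N by case: (R) k0 => [[]|].
have card_tied : (#|~: G| <= R.-1)%N.
  rewrite -(card_in_imset last_inj).
  have <- : #|[set~ Ordinal R_gt0]| = R.-1 by rewrite cardsC1 card_ord.
  apply/subset_leq_card/subsetP => _ /imsetP[r rT ->]; rewrite !inE.
  by apply/negP => /eqP eq0; have := tied_lt _ rT; rewrite eq0.
have := cardsC G; rewrite card_ord; lia.
Qed.

End LeadingExponent.

Definition interleave (Mt nu T R : nat) (f : 'I_R -> nat -> 'F_2) : bmx Mt T :=
  \matrix_(r < Mt, c < T)
    \sum_(k < R) (if (r * nu.+1 * k.+1 <= c)%N then f k (c - r * nu.+1 * k.+1)%N else 0).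

Lemma interleave_sub Mt nu T R (f g : 'I_R -> nat -> 'F_2) :
  interleave Mt nu T f - interleave Mt nu T g =
  interleave Mt nu T (fun k n => f k n - g k n).
Proof.
apply/matrixP => r c; rewrite !mxE -sumrB; apply: eq_bigr => k _.
by case: ifP; rewrite ?subr0.
Qed.

Section Interleave.
Variables (Mt nu T R K : nat) (f : 'I_R -> nat -> 'F_2).
Hypotheses (f_supp : forall k n, (K <= n)%N -> f k n = 0)
           (K_fits : (K <= T - (nu + Mt.-1 * nu.+1 * R))%N).

Lemma interleave_offset_le (r : 'I_Mt) (k : 'I_R) : (r * nu.+1 * k.+1 <= Mt.-1 * nu.+1 * R)%N.
Proof.
by rewrite leq_mul ?leq_mul // -ltnS prednK ?ltn_ord //; case: (Mt) r => [[]|].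
Qed.

Lemma interleave_last_cols_zero : last_cols_zero nu (interleave Mt nu T f).
Proof.
move=> r c le_c; rewrite mxE; apply: big1 => k _; case: ifP => // _.
by apply: f_supp; have := interleave_offset_le r k; lia.
Qed.

Lemma exists_coef_nz_or_ge k : exists n, (f k n != 0) || (K <= n)%N.
Proof. by exists K; rewrite leqnn orbT. Qed.

(* The index of the first nonzero coefficient of [f k], or [K] when [f k] = 0. *)
Definition coef_val (k : 'I_R) : nat := ex_minn (exists_coef_nz_or_ge k).

Lemma coef_val_lt k m : (m < coef_val k)%N -> f k m = 0.
Proof.
rewrite /coef_val; case: ex_minnP => v _ v_min lt_mv; apply/eqP/negPn/negP => nz.
by have := v_min m; rewrite nz => /(_ isT); rewrite leqNgt lt_mv.
Qed.

Lemma coef_val_nz k : (coef_val k < K)%N -> f k (coef_val k) != 0.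
Proof.
by rewrite /coef_val; case: ex_minnP => v /orP[// | le_Kv] _; rewrite ltnNge le_Kv.
Qed.

Lemma coef_val_zero k n : (K <= coef_val k)%N -> f k n = 0.
Proof.
move=> le_Kv; have [lt_nK | /f_supp //] := ltnP n K.
by apply: coef_val_lt; apply: leq_trans le_Kv.
Qed.

Definition coef_support : {set 'I_R} := [set k | (coef_val k < K)%N].

Section NonzeroRow.
Variable k0 : 'I_R.
Hypothesis k0_supp : k0 \in coef_support.

Local Notation min_expo := (min_expo nu.+1 coef_support k0 coef_val).
Local Notation first_min := (first_min nu.+1 coef_support k0 coef_val).
Local Notation last_min := (last_min nu.+1 coef_support k0 coef_val).

Lemma interleave_lt_min_expo (r : 'I_Mt) (c : 'I_T) :
  (c < min_expo r)%N -> interleave Mt nu T f r c = 0.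
Proof.
move=> lt_c; rewrite mxE; apply: big1 => k _; case: ifP => // le_off.
have [kS | kNS] := boolP (k \in coef_support); last first.
  by apply: coef_val_zero; move: kNS; rewrite inE -leqNgt.
apply: coef_val_lt.
by have := min_expo_le nu.+1 coef_val k0_supp r kS; rewrite /expo; lia.
Qed.

Lemma interleave_at_min_expo (r : 'I_Mt) (c : 'I_T) :
  first_min r = last_min r -> c = min_expo r :> nat -> interleave Mt nu T f r c != 0.
Proof.
move=> untied eq_c; have [att_first _] := first_minP nu.+1 coef_val k0_supp r.
have [firstS /eqP first_eq] := andP att_first.
rewrite mxE (bigD1 (first_min r)) //= big1 ?addr0.
  rewrite ifT; last by rewrite eq_c -first_eq /expo leq_addr.
  have -> : (c - r * nu.+1 * (first_min r).+1)%N = coef_val (first_min r).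
    by rewrite eq_c -first_eq /expo addKn.
  by apply: coef_val_nz; rewrite inE in firstS.
move=> k k_first; case: ifP => // le_off.
have [kS | kNS] := boolP (k \in coef_support); last first.
  by apply: coef_val_zero; move: kNS; rewrite inE -leqNgt.
apply: coef_val_lt.
have : expo nu.+1 coef_val r k != min_expo r.
  apply: contra k_first => eq_k; apply/eqP/(attains_untied k0_supp untied).
  by rewrite /attains_min kS.
have := min_expo_le nu.+1 coef_val k0_supp r kS; rewrite /expo; lia.
Qed.

End NonzeroRow.

Lemma rank_Theta_interleave :
  (exists k n, f k n != 0) ->
  ((Mt - R.-1) * nu.+1 <= \rank (Theta nu (interleave Mt nu T f)))%N.
Proof.
move=> [k0 [n0 nz]].
have k0_supp : k0 \in coef_support.
  by rewrite inE ltnNge; apply: contra nz => le_Kv; rewrite coef_val_zero.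
pose p (r : 'I_Mt) := min_expo nu.+1 coef_support k0 coef_val r.
pose G := [set r : 'I_Mt | first_min nu.+1 coef_support k0 coef_val r ==
                            last_min nu.+1 coef_support k0 coef_val r].
apply: leq_trans (@rank_Theta_ge _ _ _ _ G p _ _ _ _).
- by rewrite mulnC leq_mul2l card_untied ?orbT.
- move=> r _; have := interleave_offset_le r (argmin_expo nu.+1 coef_support k0 coef_val r).
  have := argmin_expo_in nu.+1 coef_val k0_supp r; rewrite inE /p /min_expo /expo.
  lia.
- move=> r r' _ _ lt_rr'.
  by have := min_expo_gap coef_val (ltn0Sn nu) k0_supp lt_rr'; rewrite /p; lia.
- by move=> r c _; apply: interleave_lt_min_expo.
- by move=> r c; rewrite inE => /eqP; apply: interleave_at_min_expo.
Qed.

End Interleave.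

Definition row_coef (R K : nat) (U : 'M['F_2]_(R, K)) (k : 'I_R) (n : nat) : 'F_2 :=
  if insub n is Some j then U k j else 0.

Lemma row_coef_supp R K (U : 'M['F_2]_(R, K)) k n : (K <= n)%N -> row_coef U k n = 0.
Proof. by move=> le_Kn; rewrite /row_coef insubN // -leqNgt. Qed.

Lemma row_coef_ord R K (U : 'M['F_2]_(R, K)) k (j : 'I_K) : row_coef U k j = U k j.
Proof. by rewrite /row_coef valK. Qed.

Definition encode (Mt nu T R K : nat) (U : 'M['F_2]_(R, K)) : bmx Mt T :=
  interleave Mt nu T (row_coef U).

Section Encode.
Variables (Mt nu T R K : nat).
Hypothesis K_fits : (K <= T - (nu + Mt.-1 * nu.+1 * R))%N.
Local Notation encode := (@encode Mt nu T R K).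

Lemma encode_last_cols_zero U : last_cols_zero nu (encode U).
Proof.
by apply: (interleave_last_cols_zero (K := K)) => // k n; apply: row_coef_supp.
Qed.

Lemma rank_Theta_encode_sub U V : U != V ->
  ((Mt - R.-1) * nu.+1 <= \rank (Theta nu (encode U) - Theta nu (encode V))%R)%N.
Proof.
move=> neq_UV; rewrite Theta_sub interleave_sub.
apply: (rank_Theta_interleave (K := K)) => // [k n le_Kn|].
  by rewrite !row_coef_supp ?subr0.
have /existsP[k /existsP[j neq_kj]] : [exists k, exists j, U k j != V k j].
  apply: contraR neq_UV; rewrite negb_exists => /forallP all_eq.
  apply/eqP/matrixP => k j; move: (all_eq k); rewrite negb_exists.
  by move=> /forallP/(_ j)/negPn/eqP.
by exists k, j; rewrite !row_coef_ord subr_eq0.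
Qed.

Lemma encode_inj : (R.-1 < Mt)%N -> injective encode.
Proof.
move=> lt_RMt U V eq_enc; apply/eqP/contraT => /rank_Theta_encode_sub.
by rewrite eq_enc subrr mxrank0 leqn0 muln_eq0 orbF subn_eq0 leqNgt lt_RMt.
Qed.

End Encode.

Lemma log_size_bound (Mt nu T R : nat) : (1 <= Mt)%N ->
  R%:Z * (T%:Z - nu%:Z - (nu.+1)%:Z * (Mt%:Z - 1) * ((2 ^ R)%:Z - 1) * (2 ^ R.-1)%:Z)
    <= (R * (T - (nu + Mt.-1 * nu.+1 * R)))%N%:Z.
Proof.
move=> Mt_gt0.
have le_R : (R <= (2 ^ R).-1 * 2 ^ R.-1)%N.
  rewrite -[X in (X <= _)%N]muln1 leq_mul ?expn_gt0 // -ltnS prednK ?expn_gt0 //.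
  exact: ltn_expl.
have -> : (nu.+1)%:Z * (Mt%:Z - 1) * ((2 ^ R)%:Z - 1) * (2 ^ R.-1)%:Z =
          (nu.+1 * Mt.-1 * ((2 ^ R).-1 * 2 ^ R.-1))%N%:Z.
  rewrite !PoszM mulrA; congr (_ * _ * _ * _); lia.
have : (Mt.-1 * nu.+1 * R <= nu.+1 * Mt.-1 * ((2 ^ R).-1 * 2 ^ R.-1))%N.
  by rewrite [(Mt.-1 * _)%N]mulnC leq_mul.
move: (Mt.-1 * _ * R)%N (nu.+1 * _ * _)%N => Y X le_YX.
by rewrite PoszM; apply: ler_wpM2l => //; lia.
Qed.

Theorem lemma3 (Mt nu d T : nat) :
  (1 <= Mt)%N -> (1 <= d)%N -> (d <= Mt)%N ->
  let R := (Mt - d + 1)%N in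
  let q : int := (2 ^ R)%:Z - 1 in
  q * nu%:Z + q * (nu.+1)%:Z * ((Mt%:Z - 2) * q + R%:Z) <= T%:Z ->
  exists P : {set 'M['F_2]_(Mt, T)},
    (forall B, B \in P -> last_cols_zero nu B) /\
    (forall A B, A \in P -> B \in P -> A != B ->
       (d * nu.+1 <= \rank (Theta nu A - Theta nu B)%R)%N) /\
    (0 < #|P|)%N /\
    R%:Z * (T%:Z - nu%:Z - (nu.+1)%:Z * (Mt%:Z - 1) * q * (2 ^ R.-1)%:Z)
      <= (trunc_log 2 #|P|)%:Z.
Proof.
move=> Mt_gt0 d_gt0 le_dMt R q _.
have eq_d : (Mt - R.-1)%N = d by rewrite /R addn1 /=; lia.
have lt_RMt : (R.-1 < Mt)%N by rewrite /R addn1 /=; lia.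
pose K := (T - (nu + Mt.-1 * nu.+1 * R))%N.
have K_fits : (K <= T - (nu + Mt.-1 * nu.+1 * R))%N by [].
have card_code : #|@encode Mt nu T R K @: [set: 'M['F_2]_(R, K)]| = (2 ^ (R * K))%N.
  by rewrite (card_imset _ (encode_inj K_fits lt_RMt)) cardsT card_mx card_Fp.
exists (@encode Mt nu T R K @: setT); split; [|split; [|split]].
- by move=> _ /imsetP[U _ ->]; apply: encode_last_cols_zero.
- move=> _ _ /imsetP[U _ ->] /imsetP[V _ ->] neq_enc; rewrite -eq_d.
  by apply: (rank_Theta_encode_sub K_fits); apply: contra_neq neq_enc => ->.
- by rewrite card_code expn_gt0.
by rewrite card_code trunc_expnK //; apply: log_size_bound.
Qed.
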